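(* Every normal PO-dilator has a Kruskal derivative.
   Context: A quasi embedding between partial orders $X,Y$ is a function $f$ with $f(x)\leq_Y f(y)\Rightarrow x\leq_X y$; an embedding also satisfies the converse. $\mathrm{PO}$ is the category of partial orders and quasi embeddings. $[X]^{<\omega}$ denotes the finite subsets of $X$, with $[f]^{<\omega}(a)=\{f(x)\mid x\in a\}$. A PO-dilator is a functor $W:\mathrm{PO}\to\mathrm{PO}$ mapping embeddings to embeddings, with a natural transformation $\operatorname{supp}^W:W\Rightarrow[\cdot]^{<\omega}$ such that for every embedding $f:X\to Y$, $\operatorname{rng}(W(f))=\{\sigma\in W(Y)\mid\operatorname{supp}^W_Y(\sigma)\subseteq\operatorname{rng}(f)\}$. For finite $a,b\subseteq X$, $a\leq^{\mathrm{fin}}_X b$ iff every $x\in a$ has some $y\in b$ with $x\leq_X y$ ($z\leq^{\mathrm{fin}}_X b$ means $\{z\}\leq^{\mathrm{fin}}_X b$). $W$ is normal if $\sigma\leq_{W(X)}\tau$ implies $\operatorname{supp}^W_X(\sigma)\leq^{\mathrm{fin}}_X\operatorname{supp}^W_X(\tau)$. A Kruskal fixed point of $W$ over a partial order $X$ is a partial order $Z$ with functions $\iota:X\to Z$, $\kappa:W(Z)\to Z$ such that $\operatorname{rng}(\iota)\cap\operatorname{rng}(\kappa)=\emptyset$ and, for all $x,y\in X$, $\sigma,\tau\in W(Z)$: $\iota(x)\leq_Z\iota(y)\Rightarrow x\leq_X y$; $\iota(x)\leq_Z\kappa(\tau)$ iff $\iota(x)\leq^{\mathrm{fin}}_Z\operatorname{supp}^W_Z(\tau)$;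 $\kappa(\sigma)\not\leq_Z\iota(y)$; $\kappa(\sigma)\leq_Z\kappa(\tau)$ iff ($\sigma\leq_{W(Z)}\tau$ or $\kappa(\sigma)\leq^{\mathrm{fin}}_Z\operatorname{supp}^W_Z(\tau)$). It is initial if for every Kruskal fixed point $(Z',\iota',\kappa')$ of $W$ over $X$ there is a unique quasi embedding $f:Z\to Z'$ with $f\circ\iota=\iota'$ and $f\circ\kappa=\kappa'\circ W(f)$. A Kruskal derivative of a normal PO-dilator $W$ is a tuple $(\mathcal T W,\iota,\kappa)$ consisting of a normal PO-dilator $\mathcal T W$ and families of functions $\iota_X:X\to\mathcal T W(X)$, $\kappa_X:W(\mathcal T W(X))\to\mathcal T W(X)$ indexed by partial orders $X$ such that (i) $(\mathcal T W(X),\iota_X,\kappa_X)$ is an initial Kruskal fixed point of $W$ over $X$ for each $X$, and (ii) $\iota_Y\circ f=\mathcal T W(f)\circ\iota_X$ and $\mathcal T W(f)\circ\kappa_X=\kappa_Y\circ W(\mathcal T W(f))$ for every quasi embedding $f:X\to Y$. *)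

From Stdlib Require Import List.
Set Implicit Arguments.
Unset Strict Implicit.

Record PO := {
  carrier :> Type;
  le : carrier -> carrier -> Prop;
  le_refl : forall x, le x x;
  le_antisym : forall x y, le x y -> le y x -> x = y;
  le_trans : forall x y z, le x y -> le y z -> le x z
}.

Arguments le {p} _ _.

Definition is_qemb (X Y : PO) (f : X -> Y) : Prop :=
  forall x y : X, le (f x) (f y) -> le x y.

Definition is_emb (X Y : PO) (f : X -> Y) : Prop :=
  forall x y : X, le (f x) (f y) <-> le x y.

Record QEmb (X Y : PO) := {
  qfun :> X -> Y;
  qfun_qemb : is_qemb qfun
}.

Definition qemb_id (X : PO) : QEmb X X.
Proof. refine {| qfun := fun x => x |}. intros x y H; exact H. Defined.

Definition qemb_comp (X Y Z : PO) (g : QEmb Y Z) (f : QEmb X Y) : QEmb X Z.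
Proof.
  refine {| qfun := fun x => g (f x) |}.
  intros x y H. apply (@qfun_qemb _ _ f). apply (@qfun_qemb _ _ g). exact H.
Defined.

(* Finite subsets of X are represented by lists (read as the set of their
   members).  [f]^{<omega}(a) = {f x | x in a} is [map f a]. *)

Definition le_fin (X : PO) (a b : list X) : Prop :=
  forall x, In x a -> exists y, In y b /\ le x y.

Record PODilator := {
  Dobj :> PO -> PO;
  Dmap : forall X Y : PO, QEmb X Y -> QEmb (Dobj X) (Dobj Y);
  Dmap_id : forall (X : PO) (s : Dobj X), Dmap (qemb_id X) s = s;
  Dmap_comp : forall (X Y Z : PO) (g : QEmb Y Z) (f : QEmb X Y) (s : Dobj X),
      Dmap (qemb_comp g f) s = Dmap g (Dmap f s);
  Dmap_emb : forall (X Y : PO) (f : QEmb X Y),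
      is_emb f -> is_emb (Dmap f);
  supp : forall X : PO, Dobj X -> list X;
  (* naturality, as an equality of finite sets:
     supp_Y (W(f) s) = [f]^{<omega} (supp_X s) *)
  supp_nat : forall (X Y : PO) (f : QEmb X Y) (s : Dobj X) (y : Y),
      In y (supp (Dmap f s)) <-> In y (map f (supp s));
  supp_rng : forall (X Y : PO) (f : QEmb X Y), is_emb f ->
      forall s : Dobj Y,
        (exists t : Dobj X, Dmap f t = s) <->
        (forall y, In y (supp s) -> exists x : X, f x = y)
}.

Arguments Dmap _ {X Y} _.
Arguments supp _ {X} _.

Definition normal (W : PODilator) : Prop :=
  forall (X : PO) (s t : W X), le s t -> le_fin (supp W s) (supp W t).

Definition KruskalFP (W : PODilator) (X Z : PO)
    (iota : X -> Z) (kappa : W Z -> Z) : Prop :=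
  (forall (x : X) (s : W Z), iota x <> kappa s) /\
  (forall x y : X, le (iota x) (iota y) -> le x y) /\
  (forall (x : X) (t : W Z),
      le (iota x) (kappa t) <-> le_fin (iota x :: nil) (supp W t)) /\
  (forall (s : W Z) (y : X), ~ le (kappa s) (iota y)) /\
  (forall s t : W Z,
      le (kappa s) (kappa t) <->
      (le s t \/ le_fin (kappa s :: nil) (supp W t))).

Arguments KruskalFP W {X Z} iota kappa.

Definition InitialKruskalFP (W : PODilator) (X Z : PO)
    (iota : X -> Z) (kappa : W Z -> Z) : Prop :=
  KruskalFP W iota kappa /\
  forall (Z' : PO) (iota' : X -> Z') (kappa' : W Z' -> Z'),
    KruskalFP W iota' kappa' ->
    exists f : QEmb Z Z',
      ((forall x, f (iota x) = iota' x) /\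
       (forall s, f (kappa s) = kappa' (Dmap W f s))) /\
      (forall g : QEmb Z Z',
         (forall x, g (iota x) = iota' x) ->
         (forall s, g (kappa s) = kappa' (Dmap W g s)) ->
         forall z, g z = f z).

Arguments InitialKruskalFP W {X Z} iota kappa.

Definition KruskalDerivative (W : PODilator) (TW : PODilator)
    (iota : forall X : PO, X -> TW X)
    (kappa : forall X : PO, W (TW X) -> TW X) : Prop :=
  normal TW /\
  (forall X : PO, InitialKruskalFP W (iota X) (kappa X)) /\
  (forall (X Y : PO) (f : QEmb X Y),
     (forall x : X, iota Y (f x) = Dmap TW f (iota X x)) /\
     (forall s : W (TW X),
        Dmap TW f (kappa X s) = kappa Y (Dmap W (Dmap TW f) s))).
Arguments KruskalDerivative : clear implicits.

From Stdlib Require Import List Lia PeanoNat ClassicalEpsilon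
  FunctionalExtensionality ProofIrrelevance PropExtensionality.

(** The initial Kruskal fixed point of [W] over [X] is the union of a chain of
    approximations [Z 0 ⊆ Z 1 ⊆ ...] with [Z (k+1) = X + W (Z k)], ordered by
    reading the clauses that define a Kruskal fixed point with the order of [Z k]
    on their right-hand sides; normality of [W] is what makes these relations
    partial orders at every stage.  The approximations map into any other Kruskal
    fixed point by recursion on [k], each map being a quasi embedding by
    well-founded induction on subterms, and these maps glue to the unique morphism
    out of the union.  Initiality applied to [ι ∘ f] then makes the construction a
    functor, and its support is computed stage by stage. *)

Lemma qemb_ext {X Y : PO} {f g : QEmb X Y} : (forall x, f x = g x) -> f = g.
Proof.
  destruct f as [f Hf], g as [g Hg]; simpl; intro H.
  assert (f = g) by (apply functional_extensionality; exact H). subst g.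
  f_equal. apply proof_irrelevance.
Qed.

Lemma qemb_inj {X Y : PO} (f : QEmb X Y) {x y} : f x = f y -> x = y.
Proof. intro E. apply le_antisym; apply (@qfun_qemb _ _ f); rewrite E; apply le_refl. Qed.

Lemma emb_qemb {X Y : PO} {f : X -> Y} : is_emb f -> is_qemb f.
Proof. intros H x y; apply H. Qed.

Lemma Dmap_ext (W : PODilator) {X Y : PO} {f g : QEmb X Y} s :
  (forall x, f x = g x) -> Dmap W f s = Dmap W g s.
Proof. intro H; rewrite (qemb_ext H); reflexivity. Qed.

Lemma Dmap_compE (W : PODilator) {X Y Z : PO} (g : QEmb Y Z) (f : QEmb X Y)
  (h : QEmb X Z) s :
  (forall x, h x = g (f x)) -> Dmap W h s = Dmap W g (Dmap W f s).
Proof. intro H. rewrite <- Dmap_comp. apply Dmap_ext. exact H. Qed.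

Lemma supp_Dmap_inv (W : PODilator) {X Y : PO} (f : QEmb X Y) (s : W X) y :
  In y (supp W (Dmap W f s)) -> exists x, In x (supp W s) /\ y = f x.
Proof.
  intro H. apply supp_nat, in_map_iff in H. destruct H as [x [E Hx]]. eauto.
Qed.

Lemma supp_Dmap_in (W : PODilator) {X Y : PO} (f : QEmb X Y) (s : W X) x :
  In x (supp W s) -> In (f x) (supp W (Dmap W f s)).
Proof. intro H. apply supp_nat, in_map, H. Qed.

Definition empty_po : PO.
Proof.
  refine {| carrier := Empty_set; le := fun _ _ => True |}; intros [].
Defined.

Definition empty_qemb (Y : PO) : QEmb empty_po Y :=
  {| qfun := fun e : empty_po => match e with end; qfun_qemb := fun e => match e with end |}.

(** * Quotients and colimits of chains of embeddings *)

Section PreorderQuotient.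
Context {T : Type} {R : T -> T -> Prop}.
Hypothesis R_refl : forall a, R a a.
Hypothesis R_trans : forall a b c, R a b -> R b c -> R a c.

Definition canon (a : T) : T := epsilon (inhabits a) (fun b => R a b /\ R b a).

Lemma canon_equiv a : R a (canon a) /\ R (canon a) a.
Proof. apply (epsilon_spec (inhabits a) (fun b => R a b /\ R b a)). exists a. auto. Qed.

Lemma canon_eq a b : R a b -> R b a -> canon a = canon b.
Proof.
  intros Hab Hba. unfold canon.
  replace (fun c => R a c /\ R c a) with (fun c => R b c /\ R c b).
  - apply epsilon_inh_irrelevance. exists b. auto.
  - apply functional_extensionality; intro c; apply propositional_extensionality.
    split; intros [H1 H2]; eauto.
Qed.

Lemma canon_idem a : canon (canon a) = canon a.
Proof. destruct (canon_equiv a). apply canon_eq; assumption. Qed.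

Definition quotient_le (c d : {a | canon a = a}) : Prop := R (proj1_sig c) (proj1_sig d).

Lemma quotient_le_antisym c d : quotient_le c d -> quotient_le d c -> c = d.
Proof.
  destruct c as [a Ha], d as [b Hb]; unfold quotient_le; simpl; intros H1 H2.
  assert (a = b) by (rewrite <- Ha, <- Hb; apply canon_eq; assumption). subst b.
  f_equal. apply proof_irrelevance.
Qed.

Definition quotient : PO := {|
  carrier := {a | canon a = a};
  le := quotient_le;
  le_refl := fun c => R_refl (proj1_sig c);
  le_antisym := quotient_le_antisym;
  le_trans := fun c d f => @R_trans (proj1_sig c) (proj1_sig d) (proj1_sig f) |}.

Definition class (a : T) : quotient := exist _ (canon a) (canon_idem a).

Lemma class_le a b : le (class a) (class b) <-> R a b.
Proof.
  simpl; unfold quotient_le; simpl.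
  destruct (canon_equiv a), (canon_equiv b). split; eauto.
Qed.

Lemma class_surj (c : quotient) : class (proj1_sig c) = c.
Proof.
  destruct c as [a Ha].
  apply quotient_le_antisym; unfold quotient_le; simpl; apply canon_equiv.
Qed.

End PreorderQuotient.

(* [at_stage e p z] is the image of [z : Z k] in [Z p] if [k <= p], and [None] if
   [p < k].  Recursing on [p] while shifting the chain avoids all arithmetic on the
   indices, hence all casts. *)
Fixpoint at_stage {Z : nat -> PO} (e : forall k, QEmb (Z k) (Z (S k))) (p : nat)
  : forall {k}, Z k -> option (Z p) :=
  match p return forall k, Z k -> option (Z p) with
  | 0 => fun k => match k return Z k -> option (Z 0) with
                  | 0 => fun z => Some z
                  | S _ => fun _ => None
                  end
  | S p => fun k => match k return Z k -> option (Z (S p)) with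
                    | 0 => fun z => option_map (e p) (@at_stage Z e p 0 z)
                    | S k => @at_stage (fun n => Z (S n)) (fun n => e (S n)) p k
                    end
  end.

Lemma at_stage_ind {Z : nat -> PO} {e : forall k, QEmb (Z k) (Z (S k))}
  (P : forall p, Z p -> Prop) {k} (z : Z k) :
  P k z -> (forall p w, P p w -> P (S p) (e p w)) ->
  forall p w, at_stage e p z = Some w -> P p w.
Proof.
  intros Hz Hstep p. revert Z e P k z Hz Hstep.
  induction p as [|p IH]; intros Z e P [|k] z Hz Hstep w E; simpl in E.
  - injection E as <-. exact Hz.
  - discriminate.
  - destruct (@at_stage Z e p 0 z) as [w0|] eqn:E0; simpl in E; [|discriminate].
    injection E as <-. apply Hstep. exact (IH Z e P 0 z Hz Hstep w0 E0).
  - exact (IH _ _ (fun p => P (S p)) k z Hz (fun p => Hstep (S p)) w E).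
Qed.

Section AtStage.
Context {Z : nat -> PO} {e : forall k, QEmb (Z k) (Z (S k))}.

Lemma at_stage_here k (z : Z k) : at_stage e k z = Some z.
Proof.
  revert Z e z. induction k as [|k IH]; intros Z e z; [reflexivity|].
  exact (IH (fun n => Z (S n)) (fun n => e (S n)) z).
Qed.

Lemma at_stage_S {k} {z : Z k} {p w} :
  at_stage e p z = Some w -> at_stage e (S p) z = Some (e p w).
Proof.
  revert Z e k z w. induction p as [|p IH]; intros Z e [|k] z w E.
  - simpl in *. injection E as <-. reflexivity.
  - discriminate.
  - change (option_map (e (S p)) (@at_stage Z e (S p) 0 z) = Some (e (S p) w)).
    rewrite E. reflexivity.
  - exact (IH (fun n => Z (S n)) (fun n => e (S n)) k z w E).
Qed.

Lemma at_stage_ge {k} {z : Z k} {p w} : at_stage e p z = Some w -> k <= p.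
Proof.
  apply (at_stage_ind (fun p _ => k <= p)); [lia | intros; lia].
Qed.

Lemma at_stage_defined {k} (z : Z k) {p} : k <= p -> exists w, at_stage e p z = Some w.
Proof.
  induction 1 as [|p _ [w E]].
  - exists z. apply at_stage_here.
  - exists (e p w). apply at_stage_S, E.
Qed.

End AtStage.

Section ChainColimit.
Context {Z : nat -> PO} {e : forall k, QEmb (Z k) (Z (S k))}.
Variable e_emb : forall k, is_emb (e k).

Definition thread (a : {k & Z k}) (p : nat) : option (Z p) :=
  at_stage e p (projT2 a).

Definition chain_le (a b : {k & Z k}) : Prop :=
  exists p za zb, thread a p = Some za /\ thread b p = Some zb /\ le za zb.

Lemma thread_defined a p : projT1 a <= p -> exists w, thread a p = Some w.
Proof. apply at_stage_defined. Qed.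

Lemma thread_le_invariant {a b p za zb q za' zb'} :
  thread a p = Some za -> thread b p = Some zb ->
  thread a q = Some za' -> thread b q = Some zb' -> p <= q ->
  (le za zb <-> le za' zb').
Proof.
  intros Ha Hb Ha' Hb' Hpq. revert za' zb' Ha' Hb'.
  induction Hpq as [|q Hpq IH]; intros za' zb' Ha' Hb'.
  - rewrite Ha in Ha'; rewrite Hb in Hb'. injection Ha' as <-. injection Hb' as <-. tauto.
  - destruct (thread_defined a q) as [za1 Ha1]. { apply at_stage_ge in Ha. lia. }
    destruct (thread_defined b q) as [zb1 Hb1]. { apply at_stage_ge in Hb. lia. }
    unfold thread in *.
    rewrite (at_stage_S Ha1) in Ha'; rewrite (at_stage_S Hb1) in Hb'.
    injection Ha' as <-. injection Hb' as <-.
    etransitivity; [exact (IH _ _ Ha1 Hb1) | symmetry; apply e_emb].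
Qed.

Lemma chain_le_iff {a b p za zb} :
  thread a p = Some za -> thread b p = Some zb -> (chain_le a b <-> le za zb).
Proof.
  intros Ha Hb. split; [|intro H; exists p, za, zb; auto].
  intros [q [za' [zb' [Ha' [Hb' H]]]]].
  set (m := Nat.max p q).
  destruct (thread_defined a m) as [za1 Ha1]. { apply at_stage_ge in Ha. lia. }
  destruct (thread_defined b m) as [zb1 Hb1]. { apply at_stage_ge in Hb. lia. }
  apply (thread_le_invariant Ha Hb Ha1 Hb1); [lia|].
  apply (thread_le_invariant Ha' Hb' Ha1 Hb1); [lia | exact H].
Qed.

Lemma chain_le_refl a : chain_le a a.
Proof.
  destruct a as [k z]. exists k, z, z. repeat split; try apply le_refl; apply at_stage_here.
Qed.

Lemma chain_le_trans a b c : chain_le a b -> chain_le b c -> chain_le a c.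
Proof.
  set (m := Nat.max (projT1 a) (Nat.max (projT1 b) (projT1 c))).
  destruct (thread_defined a m) as [za Ha]; [lia|].
  destruct (thread_defined b m) as [zb Hb]; [lia|].
  destruct (thread_defined c m) as [zc Hc]; [lia|].
  rewrite (chain_le_iff Ha Hb), (chain_le_iff Hb Hc), (chain_le_iff Ha Hc).
  apply le_trans.
Qed.

Definition colim : PO := quotient chain_le_refl chain_le_trans.

Definition germ (a : {k & Z k}) : colim := class chain_le_refl chain_le_trans a.

Lemma germ_le a b : le (germ a) (germ b) <-> chain_le a b.
Proof. apply class_le. Qed.

Lemma germ_surj (c : colim) : germ (proj1_sig c) = c.
Proof. apply class_surj. Qed.

Lemma germ_stage_le k (z w : Z k) :
  le (germ (existT _ k z)) (germ (existT _ k w)) <-> le z w.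
Proof. rewrite germ_le. apply chain_le_iff; apply at_stage_here. Qed.

Definition inj k : QEmb (Z k) colim :=
  {| qfun := fun z => germ (existT _ k z);
     qfun_qemb := fun z w => proj1 (germ_stage_le k z w) |}.

Lemma inj_le k (z w : Z k) : le (inj k z) (inj k w) <-> le z w.
Proof. apply germ_stage_le. Qed.

Lemma inj_emb k : is_emb (inj k).
Proof. exact (inj_le k). Qed.

Lemma inj_thread {a p w} :
  thread a p = Some w -> inj p w = germ a.
Proof.
  intro H. assert (Hw : thread (existT _ p w) p = Some w) by apply at_stage_here.
  apply le_antisym; simpl; apply germ_le;
    [rewrite (chain_le_iff Hw H) | rewrite (chain_le_iff H Hw)]; apply le_refl.
Qed.

Lemma inj_e k (z : Z k) : inj (S k) (e k z) = inj k z.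
Proof. apply inj_thread, at_stage_S, at_stage_here. Qed.

Lemma inj_surj (c : colim) : exists k z, inj k z = c.
Proof.
  destruct (proj1_sig c) as [k z] eqn:E. exists k, z.
  rewrite <- (germ_surj c), E. reflexivity.
Qed.

Lemma inj_up {k} m (z : Z k) : k <= m -> exists w, inj m w = inj k z.
Proof.
  intro H. destruct (thread_defined (existT _ k z) m H) as [w E]. exists w.
  exact (inj_thread E).
Qed.

Lemma inj_list (l : list colim) : exists k, forall c, In c l -> exists z, inj k z = c.
Proof.
  induction l as [|c l [k IH]]; [exists 0; intros c []|].
  destruct (inj_surj c) as [m [z <-]].
  exists (Nat.max k m). intros d [<- | Hd].
  - apply inj_up. lia.
  - destruct (IH d Hd) as [w <-]. apply inj_up. lia.
Qed.

Section Recursion.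
Context {A : Type} (h : forall k, Z k -> A).
Hypothesis h_e : forall k z, h (S k) (e k z) = h k z.

Lemma thread_invariant {a p w} : thread a p = Some w -> h p w = h (projT1 a) (projT2 a).
Proof.
  apply (at_stage_ind (fun p w => h p w = _)); [reflexivity|].
  intros p' w' E. rewrite h_e. exact E.
Qed.

Definition colim_rec (c : colim) : A := h (projT1 (proj1_sig c)) (projT2 (proj1_sig c)).

Lemma colim_rec_inj k z : colim_rec (inj k z) = h k z.
Proof.
  set (a := existT Z k z). set (b := proj1_sig (inj k z)).
  assert (Hba : germ b = germ a) by apply germ_surj.
  set (m := Nat.max (projT1 a) (projT1 b)).
  destruct (thread_defined a m) as [za Ha]; [lia|].
  destruct (thread_defined b m) as [zb Hb]; [lia|].
  assert (za = zb).
  { apply le_antisym; [rewrite <- (chain_le_iff Ha Hb) | rewrite <- (chain_le_iff Hb Ha)];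
      apply germ_le; rewrite Hba; apply le_refl. }
  subst zb. unfold colim_rec. fold b.
  rewrite <- (thread_invariant Hb). exact (thread_invariant Ha).
Qed.

End Recursion.

Section DilatorOnColimit.
Variable W : PODilator.

Lemma Dmap_inj_list (l : list (W colim)) :
  exists k, forall sg, In sg l -> exists s, Dmap W (inj k) s = sg.
Proof.
  destruct (inj_list (flat_map (supp W) l)) as [k Hk]. exists k. intros sg Hsg.
  apply (supp_rng (inj_emb k)). intros c Hc.
  apply Hk, in_flat_map. exists sg; auto.
Qed.

Lemma Dmap_inj_surj (sg : W colim) : exists k s, Dmap W (inj k) s = sg.
Proof.
  destruct (Dmap_inj_list (sg :: nil)) as [k Hk]. exists k. apply Hk. left; reflexivity.
Qed.

Lemma Dmap_inj_up {k} m (s : W (Z k)) :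
  k <= m -> exists t, Dmap W (inj m) t = Dmap W (inj k) s.
Proof.
  intro H. apply (supp_rng (inj_emb m)). intros c Hc.
  destruct (supp_Dmap_inv _ _ _ _ Hc) as [z [_ ->]]. apply inj_up, H.
Qed.

End DilatorOnColimit.

End ChainColimit.

Section KruskalFixedPoint.
Context {W : PODilator} {X Z : PO} {iota : X -> Z} {kappa : W Z -> Z}.
Variable HK : KruskalFP W iota kappa.

Lemma kfp_iota_neq_kappa x s : iota x <> kappa s.
Proof. apply HK. Qed.

Lemma kfp_iota_reflect {x y} : le (iota x) (iota y) -> le x y.
Proof. apply HK. Qed.

Lemma kfp_iota_le_kappa x t : le (iota x) (kappa t) <-> le_fin (iota x :: nil) (supp W t).
Proof. apply HK. Qed.

Lemma kfp_kappa_not_le_iota {s y} : ~ le (kappa s) (iota y).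
Proof. apply HK. Qed.

Lemma kfp_kappa_le s t :
  le (kappa s) (kappa t) <-> le s t \/ le_fin (kappa s :: nil) (supp W t).
Proof. apply HK. Qed.

End KruskalFixedPoint.

(** * The approximation stages *)

Section Stages.
Variable W : PODilator.
Hypothesis W_normal : normal W.
Variable X : PO.

Section NextStage.
Variable Q : PO.
Variable Bi : X -> Q -> Prop.
Variable Bk : W Q -> Q -> Prop.

(* [Bi x q] and [Bk s q] stand for [ι x ≤ q] and [κ s ≤ q] in the fixed point under
   construction; [admissible] collects what transitivity and antisymmetry of
   [next_le] require besides normality of [W]. *)
Definition next_le (a b : X + W Q) : Prop :=
  match a, b with
  | inl x, inl y => le x y
  | inl x, inr t => exists q, In q (supp W t) /\ Bi x q
  | inr _, inl _ => False
  | inr s, inr t => le s t \/ exists q, In q (supp W t) /\ Bk s q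
  end.

Record admissible : Prop := {
  Bi_antitone : forall {x y q}, le x y -> Bi y q -> Bi x q;
  Bi_up : forall {x q q'}, Bi x q -> le q q' -> Bi x q';
  Bi_supp : forall {x q s q'}, Bi x q -> In q (supp W s) -> Bk s q' -> Bi x q';
  Bk_antitone : forall {s t q}, le s t -> Bk t q -> Bk s q;
  Bk_up : forall {s q q'}, Bk s q -> le q q' -> Bk s q';
  Bk_supp : forall {s q t q'}, Bk s q -> In q (supp W t) -> Bk t q' -> Bk s q';
  Bk_supp_irrefl : forall {s q}, In q (supp W s) -> ~ Bk s q
}.

Hypothesis adm : admissible.

Lemma next_le_refl a : next_le a a.
Proof. destruct a; simpl; auto using le_refl. Qed.

Lemma next_le_trans a b c : next_le a b -> next_le b c -> next_le a c.
Proof.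
  destruct a as [x|s], b as [y|t], c as [z|u]; simpl; try tauto.
  - apply le_trans.
  - intros Hxy [q [Hq Hb]]. exists q; split; [exact Hq | exact (Bi_antitone adm Hxy Hb)].
  - intros [q [Hq Hb]] [Htu | [q' [Hq' Hb']]].
    + destruct (W_normal _ _ _ Htu _ Hq) as [q' [Hq' Hle]].
      exists q'; split; [exact Hq' | exact (Bi_up adm Hb Hle)].
    + exists q'; split; [exact Hq' | exact (Bi_supp adm Hb Hq Hb')].
  - intros [Hst | [q [Hq Hb]]] [Htu | [q' [Hq' Hb']]].
    + left; exact (le_trans Hst Htu).
    + right; exists q'; split; [exact Hq' | exact (Bk_antitone adm Hst Hb')].
    + right. destruct (W_normal _ _ _ Htu _ Hq) as [q' [Hq' Hle]].
      exists q'; split; [exact Hq' | exact (Bk_up adm Hb Hle)].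
    + right; exists q'; split; [exact Hq' | exact (Bk_supp adm Hb Hq Hb')].
Qed.

Lemma next_le_antisym a b : next_le a b -> next_le b a -> a = b.
Proof.
  destruct a as [x|s], b as [y|t]; simpl; try tauto.
  - intros; f_equal; apply le_antisym; assumption.
  - intros [Hst | [q [Hq Hb]]] [Hts | [q' [Hq' Hb']]].
    + f_equal; apply le_antisym; assumption.
    + exfalso. exact (Bk_supp_irrefl adm Hq' (Bk_antitone adm Hst Hb')).
    + exfalso. exact (Bk_supp_irrefl adm Hq (Bk_antitone adm Hts Hb)).
    + exfalso. exact (Bk_supp_irrefl adm Hq' (Bk_supp adm Hb Hq Hb')).
Qed.

Definition next_po : PO := {|
  carrier := (X + W Q)%type; le := next_le;
  le_refl := next_le_refl; le_antisym := next_le_antisym; le_trans := next_le_trans |}.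

Record stage_embedding (f : QEmb Q next_po) : Prop := {
  se_emb : is_emb f;
  se_Bi : forall {x q}, Bi x q <-> le (inl x : next_po) (f q);
  se_Bk : forall {s q}, Bk s q <-> le (inr s : next_po) (f q);
  se_down : forall {n : next_po} {q}, le n (f q) -> exists q', n = f q';
  se_supp : forall {t q}, In q (supp W t) -> le (f q) (inr t : next_po)
}.

End NextStage.

Arguments admissible {Q} Bi Bk.
Arguments Bk_supp_irrefl {Q Bi Bk} _ {s q}.
Arguments next_po {Q Bi Bk} adm.
Arguments stage_embedding {Q Bi Bk adm} f.
Arguments se_emb {Q Bi Bk adm f} _.
Arguments se_Bi {Q Bi Bk adm f} _ {x q}.
Arguments se_Bk {Q Bi Bk adm f} _ {s q}.
Arguments se_down {Q Bi Bk adm f} _ {n q}.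
Arguments se_supp {Q Bi Bk adm f} _ {t q}.

Section NextStageStep.
Variables (Q : PO) (Bi : X -> Q -> Prop) (Bk : W Q -> Q -> Prop).
Variable adm : admissible Bi Bk.
Variable f : QEmb Q (next_po adm).
Hypothesis f_spec : stage_embedding f.

Let N := next_po adm.

Definition step_Bi (x : X) (n : N) : Prop := le (inl x : N) n.

Definition step_Bk (s : W N) (n : N) : Prop :=
  exists s', Dmap W f s' = s /\ le (inr s' : N) n.

Lemma below_Dmap_range {t : W Q} {s : W N} :
  le s (Dmap W f t) -> exists s', Dmap W f s' = s.
Proof.
  intro Hle. apply (supp_rng (se_emb f_spec)). intros y Hy.
  destruct (W_normal _ _ _ Hle _ Hy) as [y' [Hy' Hyy']].
  destruct (supp_Dmap_inv _ _ _ _ Hy') as [q [_ ->]].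
  destruct (se_down f_spec Hyy') as [q' ->]. exists q'; reflexivity.
Qed.

Lemma step_admissible : admissible step_Bi step_Bk.
Proof.
  unfold step_Bi, step_Bk. constructor.
  - intros x y q Hxy H. exact (@le_trans N (inl x) (inl y) q Hxy H).
  - intros x q q' H Hq. exact (le_trans H Hq).
  - intros x q s q' H Hin [s' [<- Hs']].
    destruct (supp_Dmap_inv _ _ _ _ Hin) as [p [Hp ->]].
    exact (le_trans H (le_trans (se_supp f_spec Hp) Hs')).
  - intros s t q Hst [t' [<- Ht']].
    destruct (below_Dmap_range Hst) as [s' <-]. exists s'; split; [reflexivity|].
    refine (@le_trans N _ _ _ _ Ht'). left. exact (proj1 (Dmap_emb (se_emb f_spec) _ _) Hst).
  - intros s q q' [s' [E Hs']] Hq. exists s'; split; [exact E | exact (le_trans Hs' Hq)].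
  - intros s q t q' [s' [E Hs']] Hin [t' [<- Ht']].
    destruct (supp_Dmap_inv _ _ _ _ Hin) as [p [Hp ->]].
    exists s'; split; [exact E|].
    exact (le_trans Hs' (le_trans (se_supp f_spec Hp) Ht')).
  - intros s q Hin [s' [<- Hs']].
    destruct (supp_Dmap_inv _ _ _ _ Hin) as [p [Hp ->]].
    exact (Bk_supp_irrefl adm Hp (proj2 (se_Bk f_spec) Hs')).
Qed.

Let N' := next_po step_admissible.

Definition step_fun (n : N) : N' :=
  match n with
  | inl x => inl x
  | inr s => inr (Dmap W f s)
  end.

Lemma step_fun_emb : is_emb step_fun.
Proof.
  intros [x|s] [y|t]; cbn [le next_po next_le step_fun]; try tauto.
  - split.
    + intros [z [Hz Hb]]. destruct (supp_Dmap_inv _ _ _ _ Hz) as [q [Hq ->]].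
      exists q; split; [exact Hq | exact (proj2 (se_Bi f_spec) Hb)].
    + intros [q [Hq Hb]]. exists (f q); split.
      * apply supp_Dmap_in, Hq.
      * exact (proj1 (se_Bi f_spec) Hb).
  - split.
    + intros [H | [z [Hz [s' [E Hs']]]]]; [left; exact (proj1 (Dmap_emb (se_emb f_spec) _ _) H)|].
      right. apply qemb_inj in E. subst s'.
      destruct (supp_Dmap_inv _ _ _ _ Hz) as [q [Hq ->]].
      exists q; split; [exact Hq | exact (proj2 (se_Bk f_spec) Hs')].
    + intros [H | [q [Hq Hb]]]; [left; exact (proj2 (Dmap_emb (se_emb f_spec) _ _) H)|].
      right. exists (f q); split; [apply supp_Dmap_in, Hq|].
      exists s; split; [reflexivity | exact (proj1 (se_Bk f_spec) Hb)].
Qed.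

Lemma step_fun_kappa (s : W N) (n : N) : le (inr s : N') (step_fun n) <-> step_Bk s n.
Proof.
  split.
  - intro H. assert (Hr : exists s', Dmap W f s' = s).
    { destruct n as [y|t]; [destruct H|].
      destruct H as [H | [z [Hz [s' [E _]]]]]; [exact (below_Dmap_range H) | exists s'; exact E]. }
    destruct Hr as [s' <-]. exists s'; split; [reflexivity|].
    exact (proj1 (step_fun_emb (inr s') n) H).
  - intros [s' [<- H]]. exact (proj2 (step_fun_emb (inr s') n) H).
Qed.

Definition step_qemb : QEmb N N' := {| qfun := step_fun; qfun_qemb := emb_qemb step_fun_emb |}.

Lemma step_stage_embedding : stage_embedding step_qemb.
Proof.
  constructor.
  - exact step_fun_emb.
  - intros x n. symmetry. exact (step_fun_emb (inl x) n).
  - intros s n. symmetry. apply step_fun_kappa.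
  - intros [x|s] n H.
    + exists (inl x); reflexivity.
    + apply step_fun_kappa in H. destruct H as [s' [<- _]]. exists (inr s'); reflexivity.
  - intros t [x|s] Hin; cbn [le next_po next_le step_fun step_qemb qfun].
    + exists (inl x); split; [exact Hin | apply le_refl].
    + right. exists (inr s); split; [exact Hin|].
      exists s; split; [reflexivity | apply le_refl].
Qed.

End NextStageStep.

Arguments step_admissible {Q Bi Bk adm f} _.
Arguments step_qemb {Q Bi Bk adm f} _.
Arguments step_stage_embedding {Q Bi Bk adm f} _.

Record Stage := {
  st_prev : PO;
  st_Bi : X -> st_prev -> Prop;
  st_Bk : W st_prev -> st_prev -> Prop;
  st_adm : admissible st_Bi st_Bk;
  st_embed : QEmb st_prev (next_po st_adm);
  st_spec : stage_embedding st_embed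
}.

Definition st_top (st : Stage) : PO := next_po (st_adm st).

Definition step (st : Stage) : Stage :=
  {| st_spec := step_stage_embedding (st_spec st) |}.

Lemma empty_admissible :
  admissible (Q := empty_po) (fun _ _ => False) (fun _ _ => False).
Proof. constructor; intros; contradiction. Qed.

Lemma empty_stage_embedding : stage_embedding (adm := empty_admissible) (empty_qemb _).
Proof. constructor; [intros [] | intros ? [] ..]. Qed.

Definition base : Stage := {| st_spec := empty_stage_embedding |}.

Fixpoint stage (k : nat) : Stage :=
  match k with
  | 0 => base
  | S k => step (stage k)
  end.

Definition Z (k : nat) : PO := st_top (stage k).

Definition e (k : nat) : QEmb (Z k) (Z (S k)) := st_embed (stage (S k)).

Lemma e_emb k : is_emb (e k).
Proof. exact (se_emb (st_spec (stage (S k)))). Qed.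

Definition stage_iota k (x : X) : Z k := inl x.
Definition stage_kappa k (s : W (Z k)) : Z (S k) := inr s.

Lemma stage_iota_le_kappa k x t :
  le (stage_iota (S k) x) (stage_kappa k t) <->
  exists q, In q (supp W t) /\ le (stage_iota k x) q.
Proof. reflexivity. Qed.

Lemma stage_kappa_le k s t :
  le (stage_kappa k s) (stage_kappa k t) <->
  le s t \/ exists q, In q (supp W t) /\ le (stage_kappa k s) (e k q).
Proof.
  apply or_iff_compat_l. split; intros [q [Hq H]]; exists q; split; try exact Hq;
    apply (se_Bk (st_spec (stage (S k)))); exact H.
Qed.

Lemma stage_kappa_not_le_iota k s x : ~ le (stage_kappa k s) (stage_iota (S k) x).
Proof. intros []. Qed.

Definition subterm (st : Stage) (b' b : st_top st) : Prop :=
  exists t q, b = inr t /\ In q (supp W t) /\ b' = st_embed st q.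

Lemma subterm_wf_of_embed (st : Stage) :
  (forall q, Acc (subterm st) (st_embed st q)) -> well_founded (subterm st).
Proof. intros H n. constructor. intros b' [t [q [_ [_ ->]]]]. apply H. Qed.

Lemma subterm_wf_step {st : Stage} : well_founded (subterm st) -> well_founded (subterm (step st)).
Proof.
  intro Hwf. apply subterm_wf_of_embed. intro n. induction (Hwf n) as [n _ IH].
  constructor. intros b' [t' [q' [E [Hq' ->]]]].
  destruct n as [x|t]; [discriminate|]. injection E as <-.
  destruct (supp_Dmap_inv _ _ _ _ Hq') as [q [Hq ->]].
  apply IH. exists t, q. auto.
Qed.

Lemma subterm_wf k : well_founded (subterm (stage k)).
Proof.
  induction k as [|k IH].
  - apply subterm_wf_of_embed. intros [].
  - exact (subterm_wf_step IH).
Qed.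

Section Initiality.
Variables (Z' : PO) (i' : X -> Z') (k' : W Z' -> Z').
Hypothesis HK : KruskalFP W i' k'.

Definition extend (st : Stage) (g : QEmb (st_prev st) Z') (n : st_top st) : Z' :=
  match n with
  | inl x => i' x
  | inr s => k' (Dmap W g s)
  end.

Definition compatible (st : Stage) (g : QEmb (st_prev st) Z') : Prop :=
  forall q, extend st g (st_embed st q) = g q.

Lemma extend_qemb {st : Stage} {g : QEmb (st_prev st) Z'} :
  compatible st g -> well_founded (subterm st) -> is_qemb (extend st g).
Proof.
  intros Hc Hwf a b H. revert a H. induction (Hwf b) as [b _ IH]. intros a H.
  destruct b as [y|t], a as [x|s]; cbn [extend le st_top next_po next_le] in *.
  - exact (kfp_iota_reflect HK H).
  - exact (kfp_kappa_not_le_iota HK H).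
  - apply (kfp_iota_le_kappa HK) in H. destruct (H (i' x) (or_introl eq_refl)) as [w [Hw Hle]].
    destruct (supp_Dmap_inv _ _ _ _ Hw) as [q [Hq ->]]. rewrite <- Hc in Hle.
    exists q; split; [exact Hq|].
    apply (se_Bi (st_spec st)). refine (IH _ _ (inl x) Hle). exists t, q; auto.
  - apply (kfp_kappa_le HK) in H. destruct H as [H | H].
    + left. exact (qfun_qemb H).
    + right. destruct (H _ (or_introl eq_refl)) as [w [Hw Hle]].
      destruct (supp_Dmap_inv _ _ _ _ Hw) as [q [Hq ->]]. rewrite <- Hc in Hle.
      exists q; split; [exact Hq|].
      apply (se_Bk (st_spec st)). refine (IH _ _ (inr s) Hle). exists t, q; auto.
Qed.

Definition extend_map {st g} (Hc : compatible st g) (Hwf : well_founded (subterm st))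
  : QEmb (st_top st) Z' := {| qfun := extend st g; qfun_qemb := extend_qemb Hc Hwf |}.

Lemma compatible_step {st g} (Hc : compatible st g) (Hwf : well_founded (subterm st)) :
  compatible (step st) (extend_map Hc Hwf).
Proof.
  intros [x|s]; [reflexivity|].
  cbn [extend step st_embed step_qemb qfun step_fun extend_map].
  f_equal. symmetry. apply Dmap_compE. intro q. symmetry. apply Hc.
Qed.

Lemma compatible_base : compatible base (empty_qemb Z').
Proof. intros []. Qed.

Fixpoint approx (k : nat) : {g : QEmb (st_prev (stage k)) Z' | compatible (stage k) g} :=
  match k with
  | 0 => exist _ (empty_qemb Z') compatible_base
  | S k => exist _ _ (compatible_step (proj2_sig (approx k)) (subterm_wf k))
  end.

Definition stage_map (k : nat) : QEmb (Z k) Z' :=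
  extend_map (proj2_sig (approx k)) (subterm_wf k).

Lemma stage_map_e k z : stage_map (S k) (e k z) = stage_map k z.
Proof. exact (proj2_sig (approx (S k)) z). Qed.

Lemma stage_map_kappa k s : stage_map (S k) (stage_kappa k s) = k' (Dmap W (stage_map k) s).
Proof. reflexivity. Qed.

Section Embedding.
Hypothesis i'_mono : forall x y, le x y -> le (i' x) (i' y).

Record preserves (st : Stage) (g : QEmb (st_prev st) Z') : Prop := {
  pr_emb : is_emb g;
  pr_Bi : forall x q, st_Bi st x q -> le (i' x) (g q);
  pr_Bk : forall s q, st_Bk st s q -> le (k' (Dmap W g s)) (g q)
}.

Arguments pr_emb {st g} _.
Arguments pr_Bi {st g} _ {x q} _.
Arguments pr_Bk {st g} _ {s q} _.

Lemma extend_monotone {st g} : preserves st g ->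
  forall a b, le a b -> le (extend st g a) (extend st g b).
Proof.
  intros Hg [x|s] [y|t]; cbn [extend le st_top next_po next_le].
  - apply i'_mono.
  - intros [q [Hq Hb]]. apply (kfp_iota_le_kappa HK). intros w [<- | []].
    exists (g q). split; [apply supp_Dmap_in, Hq | exact (pr_Bi Hg Hb)].
  - intros [].
  - intros [H | [q [Hq Hb]]]; apply (kfp_kappa_le HK).
    + left. exact (proj2 (Dmap_emb (pr_emb Hg) _ _) H).
    + right. intros w [<- | []].
      exists (g q). split; [apply supp_Dmap_in, Hq | exact (pr_Bk Hg Hb)].
Qed.

Lemma preserves_step {st g} (Hc : compatible st g) (Hwf : well_founded (subterm st)) :
  preserves st g -> preserves (step st) (extend_map Hc Hwf).
Proof.
  intro Hg. constructor.
  - intros a b. split; [apply qfun_qemb | apply (extend_monotone Hg)].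
  - intros x n H. exact (extend_monotone Hg (inl x) n H).
  - intros s n [s' [<- H]].
    change (le (k' (Dmap W (extend_map Hc Hwf) (Dmap W (st_embed st) s')))
               (extend st g n)).
    rewrite <- (Dmap_compE W _ _ g); [|intro q; symmetry; apply Hc].
    exact (extend_monotone Hg (inr s') n H).
Qed.

Lemma approx_preserves k : preserves (stage k) (proj1_sig (approx k)).
Proof.
  induction k as [|k IH].
  - constructor; [intros [] | intros ? [] ..].
  - exact (preserves_step _ _ IH).
Qed.

Lemma stage_map_emb k : is_emb (stage_map k).
Proof. exact (pr_emb (approx_preserves (S k))). Qed.

End Embedding.

End Initiality.

Arguments approx {Z' i' k'} HK k.
Arguments stage_map {Z' i' k'} HK k.
Arguments stage_map_e {Z' i' k'} HK k z.
Arguments stage_map_kappa {Z' i' k'} HK k s.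
Arguments stage_map_emb {Z' i' k'} HK i'_mono k.

(** * The Kruskal fixed point *)

Local Notation C := (colim e_emb).

Local Notation inC := (inj e_emb).

Definition iotaC (x : X) : C := inC 0 (stage_iota 0 x).

Lemma kappa_witness (sg : W C) :
  exists ks : {k & W (Z k)}, Dmap W (inC (projT1 ks)) (projT2 ks) = sg.
Proof. destruct (Dmap_inj_surj e_emb W sg) as [k [s E]]. exists (existT _ k s). exact E. Qed.

(* The stage chosen here is irrelevant by [kappaC_inC]. *)
Definition kappaC (sg : W C) : C :=
  let ks := proj1_sig (constructive_indefinite_description _ (kappa_witness sg)) in
  inC (S (projT1 ks)) (stage_kappa _ (projT2 ks)).

Lemma inC_iota k x : inC k (stage_iota k x) = iotaC x.
Proof.
  induction k as [|k IH]; [reflexivity|].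
  rewrite <- IH. exact (inj_e e_emb k (stage_iota k x)).
Qed.

Lemma inC_kappa_up {k m} (s : W (Z k)) (t : W (Z m)) : k <= m ->
  Dmap W (inC m) t = Dmap W (inC k) s ->
  inC (S m) (stage_kappa m t) = inC (S k) (stage_kappa k s).
Proof.
  intro H. revert t. induction H as [|m H IH]; intros t E.
  - apply qemb_inj in E. subst t. reflexivity.
  - destruct (Dmap_inj_up e_emb W m s H) as [t0 E0].
    assert (Et : Dmap W (e m) t0 = t).
    { apply (qemb_inj (Dmap W (inC (S m)))). rewrite E, <- E0.
      symmetry. apply Dmap_compE. intro z. symmetry. apply (inj_e e_emb). }
    subst t. rewrite <- (IH t0 E0). exact (inj_e e_emb (S m) (stage_kappa m t0)).
Qed.

Lemma kappaC_inC k (s : W (Z k)) : kappaC (Dmap W (inC k) s) = inC (S k) (stage_kappa k s).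
Proof.
  unfold kappaC.
  destruct (constructive_indefinite_description _ _) as [[m t] E]; simpl in *.
  destruct (Nat.le_ge_cases k m) as [H | H].
  - exact (inC_kappa_up s t H E).
  - symmetry. exact (inC_kappa_up t s H (eq_sym E)).
Qed.

Lemma inC_kappa_prev k (s : W (st_prev (stage k))) :
  inC k (inr s) = kappaC (Dmap W (qemb_comp (inC k) (st_embed (stage k))) s).
Proof.
  rewrite Dmap_comp, kappaC_inC. symmetry. exact (inj_e e_emb k (inr s)).
Qed.

Lemma C_ind (P : C -> Prop) :
  (forall x, P (iotaC x)) ->
  (forall sg, (forall c, In c (supp W sg) -> P c) -> P (kappaC sg)) ->
  forall c, P c.
Proof.
  intros Hi Hk c. destruct (inj_surj e_emb c) as [k [z <-]]. revert z.
  induction k as [|k IH]; intros [x|s].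
  - exact (Hi x).
  - rewrite inC_kappa_prev. apply Hk. intros c Hc.
    destruct (supp_Dmap_inv _ _ _ _ Hc) as [[] _].
  - change (P (inC (S k) (stage_iota (S k) x))). rewrite inC_iota. apply Hi.
  - rewrite inC_kappa_prev. apply Hk. intros c Hc.
    destruct (supp_Dmap_inv _ _ _ _ Hc) as [z [_ ->]].
    change (P (inC (S k) (e k z))). rewrite (inj_e e_emb k z). apply IH.
Qed.

Lemma C_cases (c : C) : (exists x, c = iotaC x) \/ (exists sg, c = kappaC sg).
Proof. revert c. apply C_ind; [intro x; left | intros sg _; right]; eauto. Qed.

Lemma iotaC_le x y : le (iotaC x) (iotaC y) <-> le x y.
Proof. apply (inj_le e_emb 0). Qed.

Lemma iotaC_neq_kappaC x sg : iotaC x <> kappaC sg.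
Proof.
  destruct (Dmap_inj_surj e_emb W sg) as [k [s <-]].
  rewrite kappaC_inC, <- (inC_iota (S k) x). intro E. apply qemb_inj in E. discriminate E.
Qed.

Lemma iotaC_le_kappaC x t : le (iotaC x) (kappaC t) <-> le_fin (iotaC x :: nil) (supp W t).
Proof.
  destruct (Dmap_inj_surj e_emb W t) as [k [t0 <-]].
  rewrite kappaC_inC, <- (inC_iota (S k) x).
  rewrite (inj_le e_emb), stage_iota_le_kappa.
  rewrite (inC_iota (S k) x). split.
  - intros [z [Hz Hle]] y [<- | []]. exists (inC k z). split.
    + apply supp_Dmap_in, Hz.
    + rewrite <- (inC_iota k x). apply (inj_le e_emb), Hle.
  - intro H. destruct (H (iotaC x) (or_introl eq_refl)) as [y [Hy Hle]].
    destruct (supp_Dmap_inv _ _ _ _ Hy) as [z [Hz ->]].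
    exists z. split; [exact Hz|]. rewrite <- (inC_iota k x) in Hle.
    exact (proj1 (inj_le e_emb _ _ _) Hle).
Qed.

Lemma kappaC_not_le_iotaC sg y : ~ le (kappaC sg) (iotaC y).
Proof.
  destruct (Dmap_inj_surj e_emb W sg) as [k [s <-]].
  rewrite kappaC_inC, <- (inC_iota (S k) y), (inj_le e_emb). apply stage_kappa_not_le_iota.
Qed.

Lemma kappaC_le sg tau :
  le (kappaC sg) (kappaC tau) <-> le sg tau \/ le_fin (kappaC sg :: nil) (supp W tau).
Proof.
  destruct (Dmap_inj_list e_emb W (sg :: tau :: nil)) as [k Hk].
  destruct (Hk sg) as [s <-]; [left; reflexivity|].
  destruct (Hk tau) as [t <-]; [right; left; reflexivity|].
  rewrite !kappaC_inC, (inj_le e_emb), stage_kappa_le, (Dmap_emb (inj_emb e_emb k) s t).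
  apply or_iff_compat_l. split.
  - intros [z [Hz Hle]] y [<- | []]. exists (inC k z). split.
    + apply supp_Dmap_in, Hz.
    + rewrite <- (inj_e e_emb k z). apply (inj_le e_emb), Hle.
  - intro H. destruct (H _ (or_introl eq_refl)) as [y [Hy Hle]].
    destruct (supp_Dmap_inv _ _ _ _ Hy) as [z [Hz ->]].
    exists z. split; [exact Hz|]. rewrite <- (inj_e e_emb k z) in Hle.
    exact (proj1 (inj_le e_emb _ _ _) Hle).
Qed.

Lemma C_kruskal : KruskalFP W iotaC kappaC.
Proof.
  split; [|split; [|split; [|split]]].
  - exact iotaC_neq_kappaC.
  - intros x y. apply iotaC_le.
  - exact iotaC_le_kappaC.
  - exact kappaC_not_le_iotaC.
  - exact kappaC_le.
Qed.

Definition top_supp (st : Stage) (sp : st_prev st -> list X) (n : st_top st) : list X :=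
  match n with
  | inl x => x :: nil
  | inr s => flat_map sp (supp W s)
  end.

Fixpoint stage_supp (k : nat) : Z k -> list X :=
  match k with
  | 0 => top_supp base (fun q => match q with end)
  | S k => top_supp (stage (S k)) (stage_supp k)
  end.

Lemma stage_supp_e k (z : Z k) y : In y (stage_supp (S k) (e k z)) <-> In y (stage_supp k z).
Proof.
  revert z. induction k as [|k IH]; intros [x|s]; try reflexivity;
    cbn [stage_supp top_supp e st_embed stage step step_qemb qfun step_fun];
    rewrite !in_flat_map; split.
  - intros [w [Hw _]]. destruct (supp_Dmap_inv _ _ _ _ Hw) as [[] _].
  - intros [[] _].
  - intros [w [Hw Hy]]. destruct (supp_Dmap_inv _ _ _ _ Hw) as [q [Hq ->]].
    exists q; split; [exact Hq | apply IH, Hy].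
  - intros [q [Hq Hy]]. exists (e k q); split; [apply supp_Dmap_in, Hq | apply IH, Hy].
Qed.

Definition suppC : C -> list X := colim_rec e_emb stage_supp.

Lemma suppC_inC k z y : In y (suppC (inC k z)) <-> In y (stage_supp k z).
Proof.
  (* [stage_supp] is invariant along [e] only as a set, so transport membership. *)
  assert (Hinv : forall k (z : Z k),
    (fun y => In y (stage_supp (S k) (e k z))) = (fun y => In y (stage_supp k z))).
  { intros k' z'. apply functional_extensionality; intro y'.
    apply propositional_extensionality, stage_supp_e. }
  assert (E : (fun y => In y (suppC (inC k z))) = (fun y => In y (stage_supp k z)))
    by exact (colim_rec_inj e_emb (fun k z y => In y (stage_supp k z)) Hinv k z).
  apply (f_equal (fun P => P y)) in E. rewrite E. reflexivity.
Qed.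

Lemma suppC_iota x y : In y (suppC (iotaC x)) <-> y = x.
Proof. unfold iotaC. rewrite suppC_inC. simpl. intuition. Qed.

Lemma suppC_kappa sg y :
  In y (suppC (kappaC sg)) <-> exists c, In c (supp W sg) /\ In y (suppC c).
Proof.
  destruct (Dmap_inj_surj e_emb W sg) as [k [s <-]].
  rewrite kappaC_inC, suppC_inC. cbn [stage_supp top_supp stage_kappa].
  rewrite in_flat_map. split.
  - intros [q [Hq Hy]]. exists (inC k q). split; [apply supp_Dmap_in, Hq | apply suppC_inC, Hy].
  - intros [c [Hc Hy]]. destruct (supp_Dmap_inv _ _ _ _ Hc) as [q [Hq ->]].
    exists q. split; [exact Hq | apply suppC_inC, Hy].
Qed.

Section ColimitInitiality.
Variables (Z' : PO) (i' : X -> Z') (k' : W Z' -> Z').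
Hypothesis HK : KruskalFP W i' k'.

Lemma inC_common (c d : C) : exists p a b, inC p a = c /\ inC p b = d.
Proof.
  destruct (inj_list e_emb (c :: d :: nil)) as [p Hp].
  destruct (Hp c) as [a Ha]; [left; reflexivity|].
  destruct (Hp d) as [b Hb]; [right; left; reflexivity|].
  exists p, a, b. auto.
Qed.

Definition initial_fun : C -> Z' := colim_rec e_emb (fun k => stage_map HK k).

Lemma initial_fun_inC k z : initial_fun (inC k z) = stage_map HK k z.
Proof. exact (colim_rec_inj e_emb (fun k => stage_map HK k) (stage_map_e HK) k z). Qed.

Lemma initial_fun_qemb : is_qemb initial_fun.
Proof.
  intros c d H. destruct (inC_common c d) as [p [a [b [<- <-]]]].
  rewrite !initial_fun_inC in H. apply (inj_le e_emb). exact (qfun_qemb H).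
Qed.

Definition initial_map : QEmb C Z' := {| qfun := initial_fun; qfun_qemb := initial_fun_qemb |}.

Lemma initial_map_iota x : initial_map (iotaC x) = i' x.
Proof. exact (initial_fun_inC 0 (stage_iota 0 x)). Qed.

Lemma initial_map_kappa sg : initial_map (kappaC sg) = k' (Dmap W initial_map sg).
Proof.
  destruct (Dmap_inj_surj e_emb W sg) as [k [s <-]].
  rewrite kappaC_inC. cbn [initial_map qfun]. rewrite initial_fun_inC, stage_map_kappa.
  f_equal. apply Dmap_compE. intro z. symmetry. apply initial_fun_inC.
Qed.

Lemma initial_map_emb : (forall x y, le x y -> le (i' x) (i' y)) -> is_emb initial_map.
Proof.
  intros Hmono c d. split; [apply qfun_qemb|]. intro H.
  destruct (inC_common c d) as [p [a [b [<- <-]]]].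
  cbn [initial_map qfun]. rewrite !initial_fun_inC.
  apply (stage_map_emb HK Hmono), (inj_le e_emb), H.
Qed.

Section Uniqueness.
Variable g : QEmb C Z'.
Hypothesis g_iota : forall x, g (iotaC x) = i' x.
Hypothesis g_kappa : forall sg, g (kappaC sg) = k' (Dmap W g sg).

Lemma hom_inC_extend k :
  (forall q, g (inC k (st_embed (stage k) q)) = proj1_sig (approx HK k) q) ->
  forall z, g (inC k z) = stage_map HK k z.
Proof.
  intros Hq [x|s].
  - change (g (inC k (stage_iota k x)) = i' x). rewrite inC_iota. apply g_iota.
  - rewrite inC_kappa_prev, g_kappa. cbn [stage_map extend_map qfun extend]. f_equal.
    rewrite <- Dmap_comp. apply Dmap_ext, Hq.
Qed.

Lemma hom_inC k z : g (inC k z) = stage_map HK k z.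
Proof.
  revert z. induction k as [|k IH]; apply hom_inC_extend; [intros []|].
  intro q. change (g (inC (S k) (e k q)) = stage_map HK k q). rewrite (inj_e e_emb). apply IH.
Qed.

Lemma initial_map_unique c : g c = initial_map c.
Proof.
  destruct (inj_surj e_emb c) as [k [z <-]].
  rewrite hom_inC. symmetry. apply initial_fun_inC.
Qed.

End Uniqueness.

End ColimitInitiality.

Arguments initial_map {Z' i' k'} HK.
Arguments initial_map_iota {Z' i' k'} HK x.
Arguments initial_map_kappa {Z' i' k'} HK sg.
Arguments initial_map_emb {Z' i' k'} HK _.
Arguments initial_map_unique {Z' i' k'} HK g _ _ c.

Lemma C_initial : InitialKruskalFP W iotaC kappaC.
Proof.
  split; [exact C_kruskal|]. intros Z' i' k' HK. exists (initial_map HK). split.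
  - split; [apply initial_map_iota | apply initial_map_kappa].
  - intros g Hi Hk. exact (initial_map_unique HK g Hi Hk).
Qed.

End Stages.

(** * The Kruskal derivative *)

Section Derivative.
Variable W : PODilator.
Hypothesis W_normal : normal W.

Local Notation T X := (colim (e_emb W W_normal X)).
Local Notation iotaT X := (iotaC W W_normal X).
Local Notation kappaT X := (kappaC W W_normal X).
Local Notation suppT X := (suppC W W_normal X).

Lemma kruskal_precomp {X Y : PO} (f : QEmb X Y) :
  KruskalFP W (fun x => iotaT Y (f x)) (kappaT Y).
Proof.
  pose proof (C_kruskal W W_normal Y) as HK.
  split; [|split; [|split; [|split]]].
  - intros x s. apply (kfp_iota_neq_kappa HK).
  - intros x y H. exact (qfun_qemb (kfp_iota_reflect HK H)).
  - intros x t. apply (kfp_iota_le_kappa HK).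
  - intros s y. apply (kfp_kappa_not_le_iota HK).
  - apply (kfp_kappa_le HK).
Qed.

Definition TW_map {X Y : PO} (f : QEmb X Y) : QEmb (T X) (T Y) :=
  initial_map W W_normal X _ _ _ (kruskal_precomp f).

Lemma TW_map_iota {X Y} (f : QEmb X Y) x : TW_map f (iotaT X x) = iotaT Y (f x).
Proof. apply initial_map_iota. Qed.

Lemma TW_map_kappa {X Y} (f : QEmb X Y) s :
  TW_map f (kappaT X s) = kappaT Y (Dmap W (TW_map f) s).
Proof. apply initial_map_kappa. Qed.

Lemma TW_map_unique {X Y} (f : QEmb X Y) (g : QEmb (T X) (T Y)) :
  (forall x, g (iotaT X x) = iotaT Y (f x)) ->
  (forall s, g (kappaT X s) = kappaT Y (Dmap W g s)) ->
  forall c, g c = TW_map f c.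
Proof. apply initial_map_unique. Qed.

Lemma TW_map_id X c : TW_map (qemb_id X) c = c.
Proof.
  symmetry. apply (TW_map_unique (qemb_id X) (qemb_id _)); [reflexivity|].
  intro s. cbn [qemb_id qfun]. rewrite Dmap_id. reflexivity.
Qed.

Lemma TW_map_comp X Y Z (g : QEmb Y Z) (f : QEmb X Y) c :
  TW_map (qemb_comp g f) c = TW_map g (TW_map f c).
Proof.
  symmetry. apply (TW_map_unique _ (qemb_comp (TW_map g) (TW_map f)));
    intro; cbn [qemb_comp qfun].
  - rewrite !TW_map_iota. reflexivity.
  - rewrite !TW_map_kappa, Dmap_comp. reflexivity.
Qed.

Lemma TW_map_emb {X Y} (f : QEmb X Y) : is_emb f -> is_emb (TW_map f).
Proof.
  intro Hf. apply initial_map_emb. intros x y H. apply (iotaC_le W W_normal Y), Hf, H.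
Qed.

Lemma TW_supp_nat {X Y} (f : QEmb X Y) (c : T X) y :
  In y (suppT Y (TW_map f c)) <-> In y (map f (suppT X c)).
Proof.
  revert c y.
  apply (C_ind W W_normal X (fun c => forall y,
    In y (suppT Y (TW_map f c)) <-> In y (map f (suppT X c)))).
  - intros x y. rewrite TW_map_iota, suppC_iota, in_map_iff. split.
    + intros ->. exists x. split; [reflexivity | apply suppC_iota; reflexivity].
    + intros [x' [<- Hx']]. apply suppC_iota in Hx'. subst x'. reflexivity.
  - intros sg IH y. rewrite TW_map_kappa, suppC_kappa, in_map_iff. split.
    + intros [d' [Hd' Hy]]. destruct (supp_Dmap_inv _ _ _ _ Hd') as [d [Hd ->]].
      apply IH, in_map_iff in Hy; [|exact Hd]. destruct Hy as [x [<- Hx]].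
      exists x. split; [reflexivity|]. apply suppC_kappa. exists d; auto.
    + intros [x [<- Hx]]. apply suppC_kappa in Hx. destruct Hx as [d [Hd Hx]].
      exists (TW_map f d). split; [apply supp_Dmap_in, Hd|].
      apply IH; [exact Hd|]. apply in_map, Hx.
Qed.

Lemma TW_supp_rng {X Y} (f : QEmb X Y) : is_emb f -> forall c : T Y,
  (exists t, TW_map f t = c) <-> (forall y, In y (suppT Y c) -> exists x, f x = y).
Proof.
  intros Hf c. split.
  - intros [t <-] y Hy. apply TW_supp_nat, in_map_iff in Hy.
    destruct Hy as [x [E _]]. exists x; exact E.
  - revert c. apply (C_ind W W_normal Y (fun c =>
      (forall y, In y (suppT Y c) -> exists x, f x = y) -> exists t, TW_map f t = c)).
    + intros y H. destruct (H y) as [x <-]; [apply suppC_iota; reflexivity|].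
      exists (iotaT X x). apply TW_map_iota.
    + intros sg IH H.
      destruct (proj2 (supp_rng (TW_map_emb f Hf) sg)) as [s0 <-].
      { intros c Hc. apply IH; [exact Hc|]. intros y Hy. apply H, suppC_kappa. eauto. }
      exists (kappaT X s0). apply TW_map_kappa.
Qed.

Lemma TW_normal X (s t : T X) : le s t -> le_fin (suppT X s) (suppT X t).
Proof.
  pose proof (C_kruskal W W_normal X) as HK. revert s.
  apply (C_ind W W_normal X (fun t => forall s, le s t -> le_fin (suppT X s) (suppT X t))).
  - intros y s Hle. destruct (C_cases W W_normal X s) as [[x ->] | [sg ->]].
    + apply (kfp_iota_reflect HK) in Hle. intros z Hz. apply suppC_iota in Hz. subst z.
      exists y. split; [apply suppC_iota; reflexivity | exact Hle].
    + exfalso. exact (kfp_kappa_not_le_iota HK Hle).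
  - intros tau IH s Hle.
    assert (Hsub : forall c, In c (supp W tau) -> le_fin (suppT X s) (suppT X c) ->
                   le_fin (suppT X s) (suppT X (kappaT X tau))).
    { intros c Hc H z Hz. destruct (H z Hz) as [z' [Hz' Hzz']].
      exists z'. split; [apply suppC_kappa; eauto | exact Hzz']. }
    destruct (C_cases W W_normal X s) as [[x ->] | [sg ->]].
    + apply (kfp_iota_le_kappa HK) in Hle.
      destruct (Hle _ (or_introl eq_refl)) as [c [Hc Hxc]]. exact (Hsub c Hc (IH c Hc _ Hxc)).
    + apply (kfp_kappa_le HK) in Hle. destruct Hle as [Hle | Hle].
      * intros z Hz. apply suppC_kappa in Hz. destruct Hz as [d [Hd Hz]].
        destruct (W_normal _ _ _ Hle d Hd) as [c [Hc Hdc]].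
        destruct (IH c Hc d Hdc z Hz) as [z' [Hz' Hzz']].
        exists z'. split; [apply suppC_kappa; eauto | exact Hzz'].
      * destruct (Hle _ (or_introl eq_refl)) as [c [Hc Hsc]].
        exact (Hsub c Hc (IH c Hc _ Hsc)).
Qed.

Definition TW : PODilator := {|
  Dobj := fun X => T X;
  Dmap := @TW_map;
  Dmap_id := TW_map_id;
  Dmap_comp := TW_map_comp;
  Dmap_emb := @TW_map_emb;
  supp := fun X => suppT X;
  supp_nat := @TW_supp_nat;
  supp_rng := @TW_supp_rng
|}.

Lemma TW_kruskal_derivative :
  KruskalDerivative W TW (fun X => iotaT X) (fun X => kappaT X).
Proof.
  split; [|split].
  - exact TW_normal.
  - intro X. apply C_initial.
  - intros X Y f. split.
    + intro x. symmetry. apply TW_map_iota.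
    + intro s. apply TW_map_kappa.
Qed.

End Derivative.

Theorem theorem4p2 :
  forall W : PODilator, normal W ->
  exists (TW : PODilator)
         (iota : forall X : PO, X -> TW X)
         (kappa : forall X : PO, W (TW X) -> TW X),
    KruskalDerivative W TW iota kappa.
Proof.
  intros W W_normal.
  exists (TW W W_normal), (iotaC W W_normal), (kappaC W W_normal).
  exact (TW_kruskal_derivative W W_normal).
Qed.
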